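(* Let $p$ be a prime, $M$ an $m'\times m$ matrix over $\mathbb{F}_p$, $1\le L\le p$ an integer, and $\mathbf{L}=(L_1,\dots,L_m)$ integers with $L\le L_i\le2L$. Then for every $\mathbf{b}\in\mathbb{Z}^{m'}$, $$|\{\mathbf{x}\in D_{\mathbf{L}}:M\mathbf{x}\equiv\mathbf{b}\pmod p\}|\ll_m|\{\mathbf{x}\in D_{\mathbf{L}}:M\mathbf{x}\equiv\mathbf{0}\pmod p\}|.$$
   Context: $D_{\mathbf{L}}=\prod_{i=1}^m\{x\in\mathbb{Z}:-L_i\le x\le L_i\}$. *)

From HB Require Import structures.
From mathcomp Require Import all_boot all_order all_algebra.
Set Implicit Arguments. Unset Strict Implicit. Unset Printing Implicit Defensive.
Import Order.TTheory GRing.Theory Num.Theory.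
Local Open Scope ring_scope.

(* The box D_L = prod_i {x in Z : -L_i <= x <= L_i} is enumerated by the
   finite type [box Ls] of dependent finite functions y with
   y i in {0, ..., 2 L_i}; the corresponding integer vector is
   x_i = y_i - L_i (a bijection onto D_L). *)
Definition box (m : nat) (Ls : 'I_m -> nat) :=
  {dffun forall i : 'I_m, 'I_((2 * Ls i).+1)%N}.

Definition boxZ (m : nat) (Ls : 'I_m -> nat) (y : box Ls) : 'cV[int]_m :=
  \col_i ((nat_of_ord (y i))%:Z - (Ls i)%:Z).

Definition modp_vec (p n : nat) (v : 'cV[int]_n) : 'cV['F_p]_n :=
  map_mx (fun z : int => z%:~R) v.

Definition DL_sols (p m' m : nat) (M : 'M['F_p]_(m', m)) (Ls : 'I_m -> nat)
    (b : 'cV[int]_m') : {set box Ls} :=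
  [set y : box Ls | M *m modp_vec p (boxZ y) == modp_vec p b].

(* Sort the points of the box by their sign pattern, i.e. by which half
   [0, L_i] or (L_i, 2 L_i] of each coordinate range they lie in; there are
   2^m patterns. Inside one pattern, fixing a solution y0 of M x = b, the
   shift y |-> y - y0 (recentred by L_i) stays in the box and maps the
   solutions of M x = b injectively to solutions of M x = 0. *)
From HB Require Import structures.
From mathcomp Require Import all_boot all_order all_algebra.
From mathcomp Require Import zify ring.
Set Implicit Arguments. Unset Strict Implicit. Unset Printing Implicit Defensive.
Import GRing.Theory.
Local Open Scope ring_scope.

Lemma card_le_fibers (T T' : finType) (f : T -> T') (A : {set T}) (k : nat) :
  (forall s, #|[set x in A | f x == s]| <= k)%N -> (#|A| <= #|T'| * k)%N.
Proof.
move=> fiberA; rewrite -sum1_card (partition_big f predT) //= -sum_nat_const.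
apply: leq_sum => s _; apply: leq_trans (fiberA s); rewrite -sum1_card.
by apply: eq_leq; apply: eq_bigl => x; rewrite inE.
Qed.

Lemma modp_vecB (p n : nat) (u v : 'cV[int]_n) :
  modp_vec p (u - v) = modp_vec p u - modp_vec p v.
Proof. by apply/matrixP => i j; rewrite !mxE intrB. Qed.

Lemma modp_vec0 (p n : nat) : modp_vec p (0 : 'cV[int]_n) = 0.
Proof. by apply/matrixP => i j; rewrite !mxE. Qed.

Section SignClasses.

Variables (p m' m : nat) (M : 'M['F_p]_(m', m)) (Ls : 'I_m -> nat).

Definition box_sign (y : box Ls) : {ffun 'I_m -> bool} :=
  [ffun i => (y i <= Ls i)%N].

(* Outside the sign class of [y0] the [inord] truncation makes this junk. *)
Definition box_shift (y0 y : box Ls) : box Ls :=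
  [ffun i => inord (y i + Ls i - y0 i)].

Lemma same_sign_shift_bounds i (y0 y : box Ls) :
  (y i <= Ls i)%N = (y0 i <= Ls i)%N ->
  (y0 i <= y i + Ls i)%N /\ (y i + Ls i - y0 i < (2 * Ls i).+1)%N.
Proof.
have := ltn_ord (y i); have := ltn_ord (y0 i).
by case: (leqP (y i) (Ls i)); case: (leqP (y0 i) (Ls i)); lia.
Qed.

Lemma box_signP i (y0 y : box Ls) :
  box_sign y = box_sign y0 -> (y i <= Ls i)%N = (y0 i <= Ls i)%N.
Proof. by move/ffunP/(_ i); rewrite !ffunE. Qed.

Lemma box_shiftE (y0 y : box Ls) i :
  box_sign y = box_sign y0 -> nat_of_ord (box_shift y0 y i) = (y i + Ls i - y0 i)%N.
Proof.
move=> /(box_signP i)/same_sign_shift_bounds[_ ltn_shift].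
by rewrite ffunE inordK.
Qed.

Lemma boxZ_shift (y0 y : box Ls) :
  box_sign y = box_sign y0 -> boxZ (box_shift y0 y) = boxZ y - boxZ y0.
Proof.
move=> sign_y; apply/matrixP => i j; rewrite !mxE box_shiftE //.
have [le_y0 _] := same_sign_shift_bounds (box_signP i sign_y).
by rewrite -subzn // PoszD; ring.
Qed.

Lemma box_shift_inj (y0 : box Ls) :
  {in [pred y | box_sign y == box_sign y0] &, injective (box_shift y0)}.
Proof.
move=> y y' /eqP sign_y /eqP sign_y' eq_shift; apply/ffunP => i; apply/val_inj => /=.
have := congr1 (fun z : box Ls => nat_of_ord (z i)) eq_shift => /=.
rewrite !box_shiftE //.
have [le_y _] := same_sign_shift_bounds (box_signP i sign_y).
have [le_y' _] := same_sign_shift_bounds (box_signP i sign_y').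
lia.
Qed.

Lemma card_sign_class_sols (b : 'cV[int]_m') (s : {ffun 'I_m -> bool}) :
  (#|[set y in DL_sols M Ls b | box_sign y == s]| <= #|DL_sols M Ls 0|)%N.
Proof.
set A := [set y in _ | _].
have [-> | [y0 y0A]] := set_0Vmem A; first by rewrite cards0.
move: (y0A); rewrite inE => /andP[sol_y0 /eqP sign_y0].
have inj_shift : {in A &, injective (box_shift y0)}.
  move=> y y' /setIdP[_ sign_y] /setIdP[_ sign_y'].
  by apply: box_shift_inj; rewrite inE sign_y0.
rewrite -(card_in_imset inj_shift); apply/subset_leq_card/subsetP.
move=> _ /imsetP[y /setIdP[sol_y /eqP sign_y] ->].
move: sol_y sol_y0; rewrite !inE boxZ_shift ?sign_y //.
by move=> /eqP sol_y /eqP sol_y0; rewrite modp_vecB mulmxBr sol_y sol_y0 subrr modp_vec0.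
Qed.

End SignClasses.

Theorem lemma5p3 :
  forall m : nat, exists C : nat,
  forall (p m' : nat) (M : 'M['F_p]_(m', m)) (L : nat) (Ls : 'I_m -> nat)
         (b : 'cV[int]_m'),
    prime p ->
    (1 <= L <= p)%N ->
    (forall i : 'I_m, L <= Ls i <= 2 * L)%N ->
    (#|DL_sols M Ls b| <= C * #|DL_sols M Ls 0|)%N.
Proof.
move=> m; exists (2 ^ m)%N => p m' M L Ls b _ _ _.
have := card_le_fibers (card_sign_class_sols M Ls b).
by rewrite card_ffun card_bool card_ord.
Qed.
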